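(* There exist binary-input discrete memoryless channels $W$ and $V$ with a common finite output alphabet $\mathcal{Y}$, both symmetrized by the same involutive permutation of $\mathcal{Y}$, such that $$C(W^+,V^+)+C(W^-,V^-) > 2\,C(W,V).$$
   Context: A binary-input discrete memoryless channel (B-DMC) $W:\{0,1\}\to\mathcal{Y}$ is given by transition probabilities $W(y|x)$. Two B-DMCs $W,V$ with the same output alphabet are symmetrized by the same permutation if there is a permutation $\pi$ of $\mathcal{Y}$ with $\pi=\pi^{-1}$ such that $W(y|0)=W(\pi(y)|1)$ and $V(y|0)=V(\pi(y)|1)$ for all $y$. Mismatched capacity: for B-DMCs $W,V$ with the same output alphabet, $C(W,V)$ is the supremum of rates $R$ such that for every $\epsilon>0$ and all sufficiently large $n$ there is a codebook $\{\mathbf{x}(1),\dots,\mathbf{x}(M)\}\subset\{0,1\}^n$ with $\frac{\log M}{n}>R$ whose maximal error probability over the memoryless channel $W$ is less than $\epsilon$ when decoded with the mismatched decoder for $V$: on receiving $\mathbf{y}$ it outputs the unique $i$ with $\prod_k V(y_k|x_k(i)) > \prod_k V(y_k|x_k(j))$ for all $j\ne i$ (i.e. $d(\mathbf x(i),\mathbf y)<d(\mathbf x(j),\mathbf y)$ for the additive metric $d(x,y)=-\log V(y|x)$), and declares an erasure (error) if no such $i$ exists. Polar transforms: from a B-DMC $W:\{0,1\}\to\mathcal{Y}$ one defines $W^-:\{0,1\}\to\mathcal{Y}^2$ and $W^+:\{0,1\}\to\mathcal{Y}^2\times\mathbb{F}_2$ by $W^-(y_1y_2|u_1)=\sum_{u_2\in\mathbb{F}_2}\tfrac12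 W(y_1|u_1\oplus u_2)W(y_2|u_2)$ and $W^+(y_1y_2u_1|u_2)=\tfrac12 W(y_1|u_1\oplus u_2)W(y_2|u_2)$; $V^\pm$ are defined in the same way from $V$. *)

From HB Require Import structures.
From mathcomp Require Import all_boot all_order all_algebra.
From mathcomp Require Import all_classical all_reals all_analysis.
Set Implicit Arguments. Unset Strict Implicit. Unset Printing Implicit Defensive.
Import Order.TTheory GRing.Theory Num.Theory.
Local Open Scope ring_scope.
Local Open Scope classical_set_scope.

Section Defs.
Variable R : realType.

(* A binary-input DMC W : {0,1} -> Y, with W x y = W(y|x); false = 0, true = 1. *)
Definition bdmc (Y : finType) (W : bool -> Y -> R) : Prop :=
  (forall x y, 0 <= W x y) /\ (forall x, \sum_(y : Y) W x y = 1).

Definition symmetrized_by_same_perm (Y : finType) (W V : bool -> Y -> R) : Prop :=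
  exists pi : Y -> Y, involutive pi /\
    (forall y, W false y = W true (pi y)) /\ (forall y, V false y = V true (pi y)).

Definition polar_minus (Y : finType) (W : bool -> Y -> R) :
  bool -> (Y * Y)%type -> R :=
  fun u1 y => \sum_(u2 : bool) 2^-1 * W (u1 (+) u2) y.1 * W u2 y.2.

(* W^+(y1 y2 u1 | u2) = 1/2 W(y1|u1 xor u2) W(y2|u2); output ((y1, y2), u1) *)
Definition polar_plus (Y : finType) (W : bool -> Y -> R) :
  bool -> (Y * Y * bool)%type -> R :=
  fun u2 y => 2^-1 * W (y.2 (+) u2) y.1.1 * W u2 y.1.2.

Definition chan_n (Y : finType) (n : nat) (W : bool -> Y -> R)
  (x : {ffun 'I_n -> bool}) (y : {ffun 'I_n -> Y}) : R :=
  \prod_(k < n) W (x k) (y k).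

Definition mm_decodes_to (Y : finType) (n M : nat) (V : bool -> Y -> R)
  (c : 'I_M -> {ffun 'I_n -> bool}) (y : {ffun 'I_n -> Y}) (i : 'I_M) : bool :=
  [forall j : 'I_M, (j != i) ==> (chan_n V (c j) y < chan_n V (c i) y)].

Definition mm_error_prob (Y : finType) (n M : nat) (W V : bool -> Y -> R)
  (c : 'I_M -> {ffun 'I_n -> bool}) (i : 'I_M) : R :=
  \sum_(y : {ffun 'I_n -> Y} | ~~ mm_decodes_to V c y i) chan_n W (c i) y.

Definition mm_achievable (Y : finType) (W V : bool -> Y -> R) (r : R) : Prop :=
  forall eps : R, 0 < eps -> exists N : nat, forall n : nat, (N <= n)%N ->
    exists (M : nat) (c : 'I_M -> {ffun 'I_n -> bool}),
      (0 < M)%N /\ r < ln (M%:R) / n%:R /\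
      (forall i : 'I_M, mm_error_prob W V c i < eps).

Definition mm_capacity (Y : finType) (W V : bool -> Y -> R) : R :=
  sup [set r : R | mm_achievable W V r].

End Defs.

(* Take W the noiseless binary channel and V the channel that flips every bit.
   Decoding the output of W with the metric of V always prefers a wrong codeword,
   so C(W,V) = 0.  But W^- and V^- coincide: both output a uniformly random pair
   whose xor is the input, a noiseless channel on which matched decoding reaches
   every rate below ln 2.  Since C(W^+,V^+) >= 0, the polarized sum is positive. *)
From HB Require Import structures.
From mathcomp Require Import all_boot all_order all_algebra.
From mathcomp Require Import all_classical all_reals all_analysis.
From mathcomp Require Import lra.
Set Implicit Arguments. Unset Strict Implicit. Unset Printing Implicit Defensive.
Import Order.TTheory GRing.Theory Num.Theory.
Local Open Scope ring_scope.
Local Open Scope classical_set_scope.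

Section MismatchedCapacity.
Variables (R : realType) (Y : finType).
Implicit Types (W V : bool -> Y -> R) (r : R).

Lemma chan_n_ge0 n W (x : {ffun 'I_n -> bool}) y : bdmc W -> 0 <= chan_n W x y.
Proof. by case=> W_ge0 _; apply: prodr_ge0 => k _; apply: W_ge0. Qed.

Lemma sum_chan_n n W (x : {ffun 'I_n -> bool}) : bdmc W ->
  \sum_(y : {ffun 'I_n -> Y}) chan_n W x y = 1.
Proof.
case=> _ W_sum; rewrite /chan_n -(bigA_distr_bigA (fun k (b : Y) => W (x k) b)).
by rewrite big1 // => k _; rewrite W_sum.
Qed.

Lemma ln_card_words n : (0 < n)%N -> ln (2 ^ n)%:R / n%:R = ln 2 :> R.
Proof.
move=> n_gt0; rewrite natrX lnXn ?ltr0n // -[ln 2 *+ _]mulr_natr mulfK //.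
by rewrite pnatr_eq0 -lt0n.
Qed.

Lemma mm_achievable_neg W V r : r < 0 -> mm_achievable W V r.
Proof.
move=> r_lt0 eps eps_gt0; exists 0%N => n _.
exists 1%N, (fun _ => [ffun _ => false]); split => //; split.
  by rewrite ln1 mul0r.
move=> i; rewrite /mm_error_prob big_pred0 // => y.
by apply/negbF/forallP => j; apply/implyP; rewrite !ord1.
Qed.

Lemma mm_error_prob_repeated n M W V (c : 'I_M -> {ffun 'I_n -> bool}) i j :
  bdmc W -> i != j -> c i = c j -> mm_error_prob W V c i = 1.
Proof.
move=> hW ij cij; rewrite /mm_error_prob -(sum_chan_n (c i) hW).
apply: eq_bigl => y; apply/negP => /forallP /(_ j) /implyP.
by rewrite eq_sym ij cij ltxx => /(_ isT).
Qed.

Lemma mm_achievable_le_ln2 W V r : bdmc W -> mm_achievable W V r -> r <= ln 2.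
Proof.
move=> hW /(_ 1 ltr01) [N /(_ N.+1 (leqnSn N))] [M [c [M_gt0 [r_lt err_lt1]]]].
have c_inj : injective c.
  move=> i j cij; apply/eqP/negP => /negP ij.
  by have := err_lt1 i; rewrite (mm_error_prob_repeated V hW ij cij) ltxx.
have M_le : (M <= 2 ^ N.+1)%N.
  by have := leq_card c c_inj; rewrite card_ffun card_bool !card_ord.
apply: (le_trans (ltW r_lt)); rewrite -(@ln_card_words N.+1 (ltn0Sn N)).
by rewrite ler_wpM2r ?invr_ge0 ?ler0n // ler_ln ?posrE ?ltr0n ?expn_gt0 // ler_nat.
Qed.

Lemma mm_achievable_has_ubound W V :
  bdmc W -> has_ubound [set r | mm_achievable W V r].
Proof. by move=> hW; exists (ln 2) => r; apply: mm_achievable_le_ln2. Qed.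

Lemma mm_achievable_le_capacity W V r :
  bdmc W -> mm_achievable W V r -> r <= mm_capacity W V.
Proof. by move=> hW; apply: ub_le_sup; apply: mm_achievable_has_ubound. Qed.

Lemma mm_capacity_ge0 W V : bdmc W -> 0 <= mm_capacity W V.
Proof.
move=> hW; rewrite leNgt; apply/negP => C_lt0.
have half_lt0 : mm_capacity W V / 2 < 0 by rewrite pmulr_llt0.
by have := mm_achievable_le_capacity hW (mm_achievable_neg W V half_lt0); lra.
Qed.

Lemma mm_capacity_le0 W V :
  (forall n M (c : 'I_M -> {ffun 'I_n -> bool}), (0 < n)%N -> (1 < M)%N ->
     exists i, 1 <= mm_error_prob W V c i) ->
  mm_capacity W V <= 0.
Proof.
move=> decoding_fails; apply: ge_sup.
  by exists (-1); apply: mm_achievable_neg; rewrite ltrN10.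
move=> r /(_ 1 ltr01) [N /(_ N.+1 (leqnSn N))] [M [c [M_gt0 [r_lt err_lt1]]]].
case: (ltnP 1 M) => [M_gt1 | M_le1].
  have [i err_ge1] := decoding_fails _ _ c (ltn0Sn N) M_gt1.
  by have := err_lt1 i; rewrite ltNge err_ge1.
have M1 : M = 1%N by apply/eqP; rewrite eqn_leq M_le1.
by move: r_lt; rewrite M1 ln1 mul0r => /ltW.
Qed.

Lemma chan_n_disjoint n W (x x' : {ffun 'I_n -> bool}) y :
  (forall b, W false b * W true b = 0) -> x != x' ->
  chan_n W x y * chan_n W x' y = 0.
Proof.
move=> W_disj x_neq.
have /existsP [k neq_k] : [exists k, x k != x' k].
  apply: contraNT x_neq => /existsPn same.
  by apply/eqP/ffunP => k; apply/eqP/negPn/same.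
rewrite /chan_n (bigD1 k) //= [X in _ * X](bigD1 k) //= mulrACA.
have -> : W (x k) (y k) * W (x' k) (y k) = 0.
  by move: neq_k; case: (x k); case: (x' k) => // _; rewrite // mulrC.
by rewrite mul0r.
Qed.

Lemma mm_achievable_disjoint W r :
  bdmc W -> (forall b, W false b * W true b = 0) -> r < ln 2 ->
  mm_achievable W W r.
Proof.
move=> hW W_disj r_lt eps eps_gt0; exists 1%N => n n_gt0.
have card_words : #|{: {ffun 'I_n -> bool}}| = (2 ^ n)%N.
  by rewrite card_ffun card_bool card_ord.
exists #|{: {ffun 'I_n -> bool}}|, enum_val.
split; first by rewrite card_words expn_gt0.
split; first by rewrite card_words ln_card_words.
move=> i; rewrite /mm_error_prob big1 // => y not_decoded.
apply/eqP; apply: contraNT not_decoded => chan_neq0.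
apply/forallP => j; apply/implyP => ji.
have cji : enum_val j != enum_val i :> {ffun 'I_n -> bool}.
  by rewrite (inj_eq enum_val_inj).
have /eqP := chan_n_disjoint y W_disj cji.
rewrite mulf_eq0 (negbTE chan_neq0) orbF => /eqP ->.
by rewrite lt_def chan_neq0 chan_n_ge0.
Qed.

End MismatchedCapacity.

Section PolarTransforms.
Variable R : realType.

Lemma sum_pair (A B : finType) (F : A * B -> R) :
  \sum_(p : A * B) F p = \sum_(a : A) \sum_(b : B) F (a, b).
Proof. by rewrite pair_bigA; apply: eq_bigr => -[]. Qed.

Lemma sum_pair_mul (A B : finType) (a : R) (F : A -> R) (G : B -> R) :
  \sum_(p : A * B) a * F p.1 * G p.2 = a * (\sum_x F x) * (\sum_y G y).
Proof.
rewrite sum_pair -mulrA big_distrlr mulr_sumr /=.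
by apply: eq_bigr => x _; rewrite mulr_sumr; apply: eq_bigr => y _; rewrite mulrA.
Qed.

Variable Y : finType.
Implicit Type W : bool -> Y -> R.

Lemma bdmc_polar_minus W : bdmc W -> bdmc (polar_minus W).
Proof.
case=> W_ge0 W_sum; split=> [u y | u].
  by apply: sumr_ge0 => u2 _; rewrite !mulr_ge0 ?invr_ge0 ?ler0n.
rewrite /polar_minus exchange_big /=.
under eq_bigr do rewrite sum_pair_mul !W_sum !mulr1.
by rewrite big_bool /=; lra.
Qed.

Lemma bdmc_polar_plus W : bdmc W -> bdmc (polar_plus W).
Proof.
case=> W_ge0 W_sum; split=> [u y | u].
  by rewrite !mulr_ge0 ?invr_ge0 ?ler0n.
rewrite /polar_plus sum_pair exchange_big /=.
under eq_bigr do rewrite sum_pair_mul !W_sum !mulr1.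
by rewrite big_bool /=; lra.
Qed.

End PolarTransforms.

Section BinaryExample.
Variable R : realType.

Definition bsc (p : R) (x y : bool) : R := if x == y then 1 - p else p.

Definition xor_channel (u : bool) (y : bool * bool) : R :=
  if y.1 (+) y.2 == u then 2^-1 else 0.

Lemma bdmc_bsc p : 0 <= p <= 1 -> bdmc (bsc p).
Proof.
case/andP => p_ge0 p_le1; rewrite /bdmc /bsc.
by split=> [[] [] | []]; rewrite ?big_bool /=; lra.
Qed.

Lemma bsc_symmetrized p q : symmetrized_by_same_perm (bsc p) (bsc q).
Proof. by exists negb; split; [exact: negbK | split=> -[]]. Qed.

Lemma chan_n_bsc_diag p n (x : {ffun 'I_n -> bool}) :
  chan_n (bsc p) x x = (1 - p) ^+ n.
Proof.
by rewrite /chan_n; under eq_bigr do rewrite /bsc eqxx; rewrite prodr_const card_ord.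
Qed.

Lemma polar_minus_bsc p : p * (1 - p) = 0 -> polar_minus (bsc p) = xor_channel.
Proof.
move=> p_det; apply/funext => u; apply/funext => -[a b].
by rewrite /polar_minus big_bool /xor_channel /bsc; case: u a b => [] [] [] /=; lra.
Qed.

Lemma xor_channel_disjoint y : xor_channel false y * xor_channel true y = 0.
Proof. by case: y => [] [] []; rewrite /xor_channel /= ?mul0r ?mulr0. Qed.

Lemma bsc_flip_decoding_fails n M (c : 'I_M -> {ffun 'I_n -> bool}) :
  (0 < n)%N -> (1 < M)%N -> exists i, 1 <= mm_error_prob (bsc 0) (bsc 1) c i.
Proof.
case: n c => // n; case: M => [|[|M]] // c _ _.
have bdmc_W : bdmc (bsc 0) by apply: bdmc_bsc; rewrite lexx ler01.
have bdmc_V : bdmc (bsc 1) by apply: bdmc_bsc; rewrite ler01 lexx.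
(* The output y = c 0 of the noiseless channel has V-likelihood (1 - 1)^n = 0
   under c 0, so it can never be decoded to 0. *)
exists ord0; rewrite /mm_error_prob (bigD1 (c ord0)) /=; last first.
  apply/forallP => /(_ ord_max) /implyP /(_ isT).
  by rewrite chan_n_bsc_diag subrr exprS mul0r ltNge chan_n_ge0.
rewrite chan_n_bsc_diag subr0 expr1n lerDl sumr_ge0 // => y _.
exact: chan_n_ge0.
Qed.

End BinaryExample.

Theorem mainTheorem1 (R : realType) :
  exists (Y : finType) (W V : bool -> Y -> R),
    bdmc W /\ bdmc V /\ symmetrized_by_same_perm W V /\
    2 * mm_capacity W V <
      mm_capacity (polar_plus W) (polar_plus V) +
      mm_capacity (polar_minus W) (polar_minus V).
Proof.
have bdmc_W : bdmc (bsc (0 : R)) by apply: bdmc_bsc; rewrite lexx ler01.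
have bdmc_V : bdmc (bsc (1 : R)) by apply: bdmc_bsc; rewrite ler01 lexx.
have bdmc_xor : bdmc (@xor_channel R).
  by rewrite -(@polar_minus_bsc _ 0) ?mul0r //; apply: bdmc_polar_minus.
have ln2_gt0 : 0 < ln 2 :> R by rewrite ln_gt0 // ltr1n.
have xor_ach : mm_achievable (@xor_channel R) (@xor_channel R) (ln 2 / 2).
  by apply: mm_achievable_disjoint; [exact: bdmc_xor | exact: xor_channel_disjoint | lra].
have Cxor_ge := mm_achievable_le_capacity bdmc_xor xor_ach.
have C_le0 : mm_capacity (bsc (0 : R)) (bsc 1) <= 0.
  by apply: mm_capacity_le0 => n M c; apply: bsc_flip_decoding_fails.
have Cplus_ge0 : 0 <= mm_capacity (polar_plus (bsc (0 : R))) (polar_plus (bsc 1)).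
  exact: mm_capacity_ge0 (bdmc_polar_plus bdmc_W).
exists bool, (bsc 0), (bsc 1); do 2!split=> //; split; first exact: bsc_symmetrized.
rewrite !polar_minus_bsc ?mul0r ?subrr ?mulr0 //; lra.
Qed.
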